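(* Let $\theta(q,x):=\sum_{j=0}^{\infty}q^{j(j+1)/2}x^j$ and $w:=3/\sqrt{2}$. For all $(q,t)\in[0.75,1)\times[0,w]$, one has $\theta(q,-t+wi)\neq 0$. *)

From Stdlib Require Import Reals.
From Coquelicot Require Export Coquelicot.
Open Scope R_scope.

Definition theta_term (q : R) (x : C) (j : nat) : C :=
  Cmult (RtoC (q ^ (j * (j + 1) / 2)%nat)) (Cpow x j).

Definition theta (q : R) (x : C) : C :=
  (Series (fun j => Re (theta_term q x j)), Series (fun j => Im (theta_term q x j))).

Definition w : R := 3 / sqrt 2.

From Stdlib Require Import Reals Lra Lia Psatz.
From Coquelicot Require Import Coquelicot.
Open Scope R_scope.

(* By the Jacobi triple product, theta(q,x) = P(x) - G(x) with
   P(x) = (q;q)_oo (-xq;q)_oo (-1/x;q)_oo and G(x) = sum_{j>=1} q^{j(j-1)/2} x^{-j}.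
   We use its finite form, obtained from the q-binomial theorem applied to
   prod_{k<2n} (x q^n + q^k): there P_n - G_n differs from a partial sum of theta by
   terms whose coefficients (q;q)_n [2n, n+j]_q are within O(q^(n-j)) of 1, so
   theta = lim (P_n - G_n).
   On the line Im x = w we have 9/2 <= |x|^2 <= 9.  With rho = 1/|x|, the first two
   terms of G_n give |G_n| >= rho^2 w - rho^3/(1 - rho), the term 1/x^2 (x + q)
   having modulus at least rho^2 w.  Pairing the factors of P_n as
   (1 - q^k) |1 + x q^k| |1 + q^k/x| and bounding the first twelve pairs numerically
   for q >= 3/4 gives |P_n| <= |1 + 1/x| * 4/25 <= (48/125) rho, which is smaller. *)

(** * Finite sums and products *)

Fixpoint big {A : Type} (op : A -> A -> A) (e : A) (f : nat -> A) (n : nat) : A :=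
  match n with O => e | S m => op (big op e f m) (f m) end.

Record comm_monoid {A : Type} (op : A -> A -> A) (e : A) : Prop := {
  op_assoc : forall a b c, op a (op b c) = op (op a b) c;
  op_comm : forall a b, op a b = op b a;
  op_unit : forall a, op e a = a }.
Arguments op_assoc {A op e}.
Arguments op_comm {A op e}.
Arguments op_unit {A op e}.

Section BigOp.
Context {A : Type} {op : A -> A -> A} {e : A}.
Local Notation big := (big op e).

Lemma big_ext (f g : nat -> A) n :
  (forall i, (i < n)%nat -> f i = g i) -> big f n = big g n.
Proof.
  induction n as [|n IH]; intros Hfg; simpl; auto.
  rewrite IH by (intros; apply Hfg; lia).
  rewrite Hfg by lia; reflexivity.
Qed.

Hypothesis M : comm_monoid op e.

Lemma op_unit_r a : op a e = a.
Proof. rewrite (op_comm M); apply (op_unit M). Qed.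

Lemma op_left_comm a b c : op a (op b c) = op b (op a c).
Proof. rewrite !(op_assoc M), (op_comm M a); reflexivity. Qed.

Lemma big_split f n m : big f (n + m) = op (big f n) (big (fun i => f (n + i)%nat) m).
Proof.
  induction m as [|m IH]; simpl.
  - rewrite Nat.add_0_r, op_unit_r; reflexivity.
  - rewrite Nat.add_succ_r; simpl; rewrite IH, (op_assoc M); reflexivity.
Qed.

Lemma big_shift f n : big f (S n) = op (f O) (big (fun i => f (S i)) n).
Proof.
  change (S n) with (1 + n)%nat; rewrite big_split; simpl.
  rewrite (op_unit M); reflexivity.
Qed.

Lemma big_rev f n : big f n = big (fun i => f (n - S i)%nat) n.
Proof.
  induction n as [|n IH]; auto.
  rewrite (big_shift (fun i => f (S n - S i)%nat)); simpl big at 1.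
  rewrite IH, (op_comm M); f_equal; f_equal; lia.
Qed.

Lemma big_op f g n : big (fun i => op (f i) (g i)) n = op (big f n) (big g n).
Proof.
  induction n as [|n IH]; simpl.
  - rewrite (op_unit M); reflexivity.
  - rewrite IH, <- !(op_assoc M), (op_left_comm (big g n)); reflexivity.
Qed.

Lemma big_interleave f g n :
  op (big f (S n)) (big g (S n)) = op (op (g O) (big (fun i => op (f i) (g (S i))) n)) (f n).
Proof.
  rewrite big_op, (big_shift g); simpl big at 1.
  rewrite <- !(op_assoc M), (op_left_comm (f n)), (op_left_comm (big f n)), (op_comm M (f n)).
  reflexivity.
Qed.

End BigOp.

Lemma big_morph {A B : Type} (opA : A -> A -> A) (eA : A) (opB : B -> B -> B) (eB : B)
  (phi : A -> B) :
  phi eA = eB -> (forall a b, phi (opA a b) = opB (phi a) (phi b)) ->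
  forall f n, phi (big opA eA f n) = big opB eB (fun i => phi (f i)) n.
Proof. intros He Hop f n; induction n as [|n IH]; simpl; congruence. Qed.

Notation csum := (big Cplus (RtoC 0)).
Notation cprod := (big Cmult (RtoC 1)).
Notation rsum := (big Rplus 0).
Notation rprod := (big Rmult 1).

Lemma Cplus_comm_monoid : comm_monoid Cplus (RtoC 0).
Proof. split; intros; ring. Qed.
Lemma Cmult_comm_monoid : comm_monoid Cmult (RtoC 1).
Proof. split; intros; ring. Qed.
Lemma Rmult_comm_monoid : comm_monoid Rmult 1.
Proof. split; intros; ring. Qed.

Lemma rsum_le (f g : nat -> R) n :
  (forall i, (i < n)%nat -> f i <= g i) -> rsum f n <= rsum g n.
Proof.
  induction n as [|n IH]; intros Hfg; simpl; [lra|].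
  assert (f n <= g n) by (apply Hfg; lia).
  assert (rsum f n <= rsum g n) by (apply IH; intros; apply Hfg; lia).
  lra.
Qed.

Lemma rprod_le (f g : nat -> R) n :
  (forall i, (i < n)%nat -> 0 <= f i <= g i) -> 0 <= rprod f n <= rprod g n.
Proof.
  induction n as [|n IH]; intros Hfg; simpl; [lra|].
  assert (0 <= f n <= g n) by (apply Hfg; lia).
  assert (0 <= rprod f n <= rprod g n) by (apply IH; intros; apply Hfg; lia).
  split; [apply Rmult_le_pos | apply Rmult_le_compat]; lra.
Qed.

Lemma rsum_sum_n (f : nat -> R) n : rsum f (S n) = sum_n f n.
Proof.
  induction n as [|n IH].
  - rewrite sum_O; simpl; ring.
  - rewrite sum_Sn, <- IH; reflexivity.
Qed.

Lemma Cmod_csum_le (f : nat -> C) n : Cmod (csum f n) <= rsum (fun i => Cmod (f i)) n.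
Proof.
  induction n as [|n IH]; simpl.
  - rewrite Cmod_0; lra.
  - eapply Rle_trans; [apply Cmod_triangle | lra].
Qed.

Lemma Re_csum (f : nat -> C) n : Re (csum f n) = rsum (fun i => Re (f i)) n.
Proof. apply big_morph; reflexivity. Qed.

Lemma Im_csum (f : nat -> C) n : Im (csum f n) = rsum (fun i => Im (f i)) n.
Proof. apply big_morph; reflexivity. Qed.

Lemma weighted_csum_error (v : nat -> R) (a : nat -> C) N :
  (forall j, (j < N)%nat -> 0 <= v j <= 1) ->
  Cmod (csum (fun j => RtoC (v j) * a j)%C N - csum a N)
  <= rsum (fun j => (1 - v j) * Cmod (a j)) N.
Proof.
  induction N as [|N IH]; intros Hv; simpl.
  - replace (0 - 0)%C with (RtoC 0) by ring; rewrite Cmod_0; lra.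
  - replace (csum (fun j => RtoC (v j) * a j)%C N + RtoC (v N) * a N - (csum a N + a N))%C
      with ((csum (fun j => RtoC (v j) * a j)%C N - csum a N) + RtoC (v N - 1) * a N)%C
      by (rewrite RtoC_minus; ring).
    eapply Rle_trans; [apply Cmod_triangle|].
    apply Rplus_le_compat; [apply IH; intros; apply Hv; lia|].
    specialize (Hv N ltac:(lia)).
    rewrite Cmod_mult, Cmod_R, Rabs_left1 by lra; lra.
Qed.

Lemma pow_antimono (q : R) a b : 0 <= q <= 1 -> (a <= b)%nat -> q ^ b <= q ^ a.
Proof.
  intros Hq Hab; replace b with (a + (b - a))%nat by lia; rewrite pow_add.
  assert (q ^ (b - a) <= 1) by (rewrite <- (pow1 (b - a)); apply pow_incr; lra).
  assert (0 <= q ^ a) by (apply pow_le; lra).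
  nra.
Qed.

Lemma geom_partial_le (r : R) n : 0 <= r < 1 -> rsum (fun i => r ^ i) n <= / (1 - r).
Proof.
  intros Hr.
  assert (Hsum : rsum (fun i => r ^ i) n * (1 - r) = 1 - r ^ n).
  { induction n as [|n IH]; simpl; [ring|].
    rewrite Rmult_plus_distr_r, IH; ring. }
  assert (0 <= r ^ n) by (apply pow_le; lra).
  apply (Rmult_le_reg_r (1 - r)); [lra|].
  rewrite Hsum, Rinv_l; lra.
Qed.

Lemma one_sub_rprod_le (y : nat -> R) n :
  (forall k, (k < n)%nat -> 0 <= y k <= 1) ->
  0 <= rprod (fun k => 1 - y k) n <= 1 /\ 1 - rprod (fun k => 1 - y k) n <= rsum y n.
Proof.
  induction n as [|n IH]; intros Hy; simpl; [lra|].
  destruct IH as [[P0 P1] P2]; [intros; apply Hy; lia|].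
  assert (0 <= y n <= 1) by (apply Hy; lia).
  split; [split|]; nra.
Qed.

(** * q-Pochhammer symbols and Gaussian binomial coefficients *)

Fixpoint binom2 (n : nat) : nat :=
  match n with O => O | S k => (binom2 k + k)%nat end.

Lemma binom2_double n : (2 * binom2 n + n = n * n)%nat.
Proof. induction n; simpl; nia. Qed.

Lemma binom2_add a b : binom2 (a + b) = (binom2 a + a * b + binom2 b)%nat.
Proof.
  pose proof (binom2_double a); pose proof (binom2_double b).
  pose proof (binom2_double (a + b)); nia.
Qed.

Lemma binom2_S_div j : (j * (j + 1) / 2)%nat = binom2 (S j).
Proof.
  pose proof (binom2_double (S j)).
  replace (j * (j + 1))%nat with (binom2 (S j) * 2)%nat by nia.
  apply Nat.div_mul; lia.
Qed.

(* [qpoch q a n] is (q^a; q)_n; in particular (q;q)_n is [qpoch q 1 n]. *)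
Definition qpoch (q : R) (a n : nat) : R := rprod (fun k => 1 - q ^ (a + k)) n.

Lemma qpoch_split q a n m : qpoch q a (n + m) = qpoch q a n * qpoch q (a + n) m.
Proof.
  unfold qpoch; rewrite (big_split Rmult_comm_monoid); f_equal.
  apply big_ext; intros; do 2 f_equal; lia.
Qed.

Lemma qpoch_pos q a n : 0 <= q < 1 -> (0 < a)%nat -> 0 < qpoch q a n.
Proof.
  intros Hq Ha; unfold qpoch; induction n as [|n IH]; simpl; [lra|].
  assert (q ^ (a + n) < 1) by (apply pow_lt_1_compat; lra || lia).
  apply Rmult_lt_0_compat; lra.
Qed.

Lemma qpoch_bounds q a n :
  0 <= q < 1 -> 0 <= qpoch q a n <= 1 /\ 1 - qpoch q a n <= q ^ a / (1 - q).
Proof.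
  intros Hq.
  assert (Hy : forall k, 0 <= q ^ (a + k) <= 1).
  { intros k; split; [apply pow_le; lra | rewrite <- (pow1 (a + k)); apply pow_incr; lra]. }
  destruct (one_sub_rprod_le (fun k => q ^ (a + k)) n) as [H01 Hsum]; [intros; apply Hy|].
  split; [exact H01|].
  eapply Rle_trans; [exact Hsum|].
  rewrite (big_ext _ (fun k => q ^ a * q ^ k)) by (intros; apply pow_add).
  rewrite <- (big_morph Rplus 0 Rplus 0 (Rmult (q ^ a))) by (intros; ring).
  unfold Rdiv; apply Rmult_le_compat_l; [apply pow_le; lra | apply geom_partial_le; lra].
Qed.

Fixpoint qbin (q : R) (m i : nat) : R :=
  match m, i with
  | _, O => 1
  | O, S _ => 0
  | S m', S i' => qbin q m' (S i') + q ^ (m' - i') * qbin q m' i'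
  end.

Lemma qbin_gt q m i : (m < i)%nat -> qbin q m i = 0.
Proof.
  revert i; induction m as [|m IH]; intros [|i] Hi; simpl; try lia; auto.
  rewrite !IH by lia; ring.
Qed.

Lemma qbin_diag q m : qbin q m m = 1.
Proof. induction m as [|m IH]; simpl; auto; rewrite qbin_gt, Nat.sub_diag, IH by lia; ring. Qed.

Lemma qpoch_S q a n : qpoch q a (S n) = qpoch q a n * (1 - q ^ (a + n)).
Proof. reflexivity. Qed.

Lemma qbin_qpoch q m i :
  (i <= m)%nat -> qbin q m i * qpoch q 1 i * qpoch q 1 (m - i) = qpoch q 1 m.
Proof.
  revert i; induction m as [|m IH]; intros [|i] Hi; try lia.
  - unfold qpoch; simpl; ring.
  - simpl qbin; rewrite Nat.sub_0_r; unfold qpoch; simpl; ring.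
  - change (S m - S i)%nat with (m - i)%nat; simpl qbin.
    destruct (Nat.eq_dec i m) as [->|Hne].
    + rewrite qbin_gt, qbin_diag, Nat.sub_diag by lia.
      change (qpoch q 1 0) with 1; simpl; ring.
    + pose proof (IH (S i) ltac:(lia)) as H1.
      pose proof (IH i ltac:(lia)) as H2.
      replace (m - i)%nat with (S (m - S i)) in * by lia.
      set (p := (m - S i)%nat) in *.
      assert (Hpow : q ^ S p * q ^ (1 + i) = q ^ (1 + m))
        by (rewrite <- pow_add; f_equal; unfold p; lia).
      rewrite !qpoch_S in *; rewrite <- Hpow.
      transitivity (qbin q m (S i) * (qpoch q 1 i * (1 - q ^ (1 + i))) * qpoch q 1 p
                    * (1 - q ^ (1 + p))
                    + q ^ S p * (qbin q m i * qpoch q 1 i * (qpoch q 1 p * (1 - q ^ (1 + p))))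
                    * (1 - q ^ (1 + i))); [ring|].
      rewrite H1, H2; simpl; ring.
Qed.

(** * The finite Jacobi triple product *)

(* (q;q)_n [2n, n+j]_q in product form. *)
Definition tp_coef (q : R) (n j : nat) : R :=
  qpoch q (S (n - j)) j * qpoch q (S (n + j)) (n - j).

Lemma tp_coef_qbin q n j : 0 <= q < 1 -> (j <= n)%nat ->
  qbin q (2 * n) (n - j) * qpoch q 1 n = tp_coef q n j /\
  qbin q (2 * n) (n + j) * qpoch q 1 n = tp_coef q n j.
Proof.
  intros Hq Hj.
  pose proof (qbin_qpoch q (2 * n) (n - j) ltac:(lia)) as Hlo.
  pose proof (qbin_qpoch q (2 * n) (n + j) ltac:(lia)) as Hhi.
  replace (2 * n - (n - j))%nat with (n + j)%nat in Hlo by lia.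
  replace (2 * n - (n + j))%nat with (n - j)%nat in Hhi by lia.
  pose proof (qpoch_split q 1 (n - j) j) as Hn.
  pose proof (qpoch_split q 1 (n + j) (n - j)) as H2n.
  replace (n - j + j)%nat with n in Hn by lia.
  replace (n + j + (n - j))%nat with (2 * n)%nat in H2n by lia.
  pose proof (qpoch_pos q 1 (n - j) Hq ltac:(lia)).
  pose proof (qpoch_pos q 1 (n + j) Hq ltac:(lia)).
  unfold tp_coef; rewrite Hn.
  change (1 + (n - j))%nat with (S (n - j)) in *.
  change (1 + (n + j))%nat with (S (n + j)) in *.
  rewrite H2n in Hlo, Hhi.
  split; apply (Rmult_eq_reg_r (qpoch q 1 (n - j) * qpoch q 1 (n + j))); try nra.
  - transitivity (qbin q (2 * n) (n - j) * qpoch q 1 (n - j) * qpoch q 1 (n + j)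
                  * (qpoch q 1 (n - j) * qpoch q (S (n - j)) j)); [ring|].
    rewrite Hlo; ring.
  - transitivity (qbin q (2 * n) (n + j) * qpoch q 1 (n + j) * qpoch q 1 (n - j)
                  * (qpoch q 1 (n - j) * qpoch q (S (n - j)) j)); [ring|].
    rewrite Hhi; ring.
Qed.

Lemma tp_coef_bounds q n j : 0 <= q < 1 -> (j <= n)%nat ->
  0 <= tp_coef q n j <= 1 /\ 1 - tp_coef q n j <= 2 / (1 - q) * q ^ (n - j).
Proof.
  intros Hq Hj; unfold tp_coef.
  destruct (qpoch_bounds q (S (n - j)) j Hq) as [[X0 X1] HX].
  destruct (qpoch_bounds q (S (n + j)) (n - j) Hq) as [[Y0 Y1] HY].
  assert (Hdiv : forall u v, u <= v -> u / (1 - q) <= v / (1 - q))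
    by (intros; apply Rmult_le_compat_r; [apply Rlt_le, Rinv_0_lt_compat|]; lra).
  assert (Hlo : q ^ S (n - j) / (1 - q) <= q ^ (n - j) / (1 - q))
    by (apply Hdiv, pow_antimono; lra || lia).
  assert (Hhi : q ^ S (n + j) / (1 - q) <= q ^ (n - j) / (1 - q))
    by (apply Hdiv, pow_antimono; lra || lia).
  replace (2 / (1 - q) * q ^ (n - j)) with (q ^ (n - j) / (1 - q) + q ^ (n - j) / (1 - q))
    by (field; lra).
  split; [split|]; nra.
Qed.

Section ProductExpansion.
Local Open Scope C_scope.

Lemma prod_linear_factors (a : nat -> C) (c : nat -> nat -> C) :
  (forall m, c m O = 1) -> (forall m i, (m < i)%nat -> c m i = 0) ->
  (forall m i, c (S m) (S i) = c m (S i) + a m * c m i) ->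
  forall y m, cprod (fun k => y + a k) m = csum (fun i => c m i * y ^ (m - i)) (S m).
Proof.
  intros Hc0 Hcgt Hrec y m; induction m as [|m IH]; [simpl; rewrite Hc0; ring|].
  assert (Hy : csum (fun i => c m i * y ^ (m - i)) (S m) * y
               = y ^ S m + csum (fun i => c m (S i) * y ^ (m - i)) (S m)).
  { rewrite Cmult_comm, (big_morph Cplus 0 Cplus 0 (Cmult y)) by (intros; ring).
    rewrite (big_shift Cplus_comm_monoid), Hc0; simpl big.
    rewrite (Hcgt m (S m)), Nat.sub_0_r by lia.
    rewrite (big_ext _ (fun i => c m (S i) * y ^ (m - i))); [simpl; ring|].
    intros i Hi; replace (m - i)%nat with (S (m - S i)) by lia; simpl; ring. }
  change (cprod (fun k => y + a k) (S m)) with (cprod (fun k => y + a k) m * (y + a m)).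
  rewrite IH, Cmult_plus_distr_l, Hy.
  rewrite (big_shift Cplus_comm_monoid _ (S m)), Hc0.
  rewrite (big_ext (fun i => c (S m) (S i) * y ^ (S m - S i))
                   (fun i => c m (S i) * y ^ (m - i) + a m * (c m i * y ^ (m - i))))
    by (intros; rewrite Hrec; simpl; ring).
  rewrite (big_op Cplus_comm_monoid), <- (big_morph Cplus 0 Cplus 0 (Cmult (a m)))
    by (intros; ring).
  rewrite Nat.sub_0_r; ring.
Qed.

Lemma q_binomial (q : R) (y : C) m :
  cprod (fun k => y + RtoC (q ^ k)) m
  = csum (fun i => RtoC (qbin q m i * q ^ binom2 i) * y ^ (m - i)) (S m).
Proof.
  apply prod_linear_factors with (c := fun k i => RtoC (qbin q k i * q ^ binom2 i)).
  - intros [|k]; simpl; f_equal; ring.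
  - intros k i Hi; rewrite qbin_gt by exact Hi; f_equal; ring.
  - intros k i; rewrite <- RtoC_mult, <- RtoC_plus; f_equal; simpl qbin; simpl binom2.
    destruct (Nat.le_gt_cases i k) as [Hle|Hgt].
    + replace (q ^ k)%R with (q ^ (k - i) * q ^ i)%R by (rewrite <- pow_add; f_equal; lia).
      rewrite pow_add; ring.
    + rewrite !qbin_gt by lia; ring.
Qed.

End ProductExpansion.

Section FiniteTripleProduct.
Local Open Scope C_scope.

(* [tp_prod] is (q;q)_n (-xq;q)_n (-1/x;q)_n; [tp_pos] and [tp_neg] are the parts
   j >= 0 and j < 0 of its expansion sum_{|j|<=n} (q;q)_n [2n, n+j]_q q^{j(j+1)/2} x^j;
   [tp_tail] is the n-th partial sum of G(x). *)
Definition tp_prod (q : R) (x : C) (n : nat) : C :=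
  RtoC (qpoch q 1 n) * cprod (fun k => 1 + x * RtoC (q ^ S k)) n
  * cprod (fun k => 1 + / x * RtoC (q ^ k)) n.

Definition tp_pos (q : R) (x : C) (n : nat) : C :=
  csum (fun j => RtoC (tp_coef q n j * q ^ binom2 (S j)) * x ^ j) (S n).

Definition tp_neg (q : R) (x : C) (n : nat) : C :=
  csum (fun j => RtoC (tp_coef q n (S j) * q ^ binom2 (S j)) * (/ x) ^ S j) n.

Definition tp_tail (q : R) (x : C) (n : nat) : C :=
  csum (fun j => RtoC (q ^ binom2 (S j)) * (/ x) ^ S j) n.

Lemma cprod_const (c : C) n : cprod (fun _ => c) n = c ^ n.
Proof. induction n as [|n IH]; simpl; [|rewrite IH]; ring. Qed.

Lemma cprod_qpow (q : R) n : cprod (fun k => RtoC (q ^ k)) n = RtoC (q ^ binom2 n).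
Proof.
  induction n as [|n IH]; simpl; [reflexivity|].
  rewrite IH, <- RtoC_mult, <- pow_add; reflexivity.
Qed.

Variables (q : R) (x : C) (n : nat).
Hypothesis Hq : (0 < q < 1)%R.
Hypothesis Hx : x <> 0.
Let y : C := x * RtoC (q ^ n).

Lemma shifted_prod_factor :
  cprod (fun k => y + RtoC (q ^ k)) (2 * n)
  = RtoC (q ^ binom2 n) * y ^ n * cprod (fun k => 1 + x * RtoC (q ^ S k)) n
    * cprod (fun k => 1 + / x * RtoC (q ^ k)) n.
Proof.
  replace (2 * n)%nat with (n + n)%nat by lia.
  rewrite (big_split Cmult_comm_monoid).
  rewrite (big_ext (fun k => y + RtoC (q ^ k))
                   (fun k => RtoC (q ^ k) * (1 + x * RtoC (q ^ (n - k))))).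
  2:{ intros k Hk; unfold y.
      replace (q ^ n)%R with (q ^ k * q ^ (n - k))%R by (rewrite <- pow_add; f_equal; lia).
      rewrite RtoC_mult; ring. }
  rewrite (big_op Cmult_comm_monoid), cprod_qpow, (big_rev Cmult_comm_monoid _ n).
  rewrite (big_ext (fun i => 1 + x * RtoC (q ^ (n - (n - S i))))
                   (fun k => 1 + x * RtoC (q ^ S k)))
    by (intros k Hk; do 4 f_equal; lia).
  rewrite (big_ext (fun k => y + RtoC (q ^ (n + k)))
                   (fun k => y * (1 + / x * RtoC (q ^ k)))).
  2:{ intros k Hk; unfold y; rewrite pow_add, RtoC_mult; field; exact Hx. }
  rewrite (big_op Cmult_comm_monoid), cprod_const; ring.
Qed.

Lemma qbinomial_low_half :
  RtoC (qpoch q 1 n)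
  * csum (fun i => RtoC (qbin q (2 * n) i * q ^ binom2 i) * y ^ (2 * n - i)) (S n)
  = RtoC (q ^ binom2 n) * y ^ n * tp_pos q x n.
Proof.
  unfold tp_pos; rewrite (big_rev Cplus_comm_monoid).
  rewrite !(big_morph Cplus 0 Cplus 0 (Cmult _)) by (intros; ring).
  apply big_ext; intros j Hj.
  replace (S n - S j)%nat with (n - j)%nat by lia.
  replace (2 * n - (n - j))%nat with (n + j)%nat by lia.
  destruct (tp_coef_qbin q n j ltac:(lra) ltac:(lia)) as [Hcoef _].
  assert (Hexp : (binom2 (n - j) + n * j = binom2 n + binom2 (S j))%nat).
  { pose proof (binom2_add (n - j) j) as Hadd; replace (n - j + j)%nat with n in Hadd by lia.
    pose proof (binom2_double j); simpl; nia. }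
  rewrite Cpow_add_r; unfold y at 2; rewrite Cpow_mult_l, <- RtoC_pow, <- pow_mult.
  transitivity (RtoC (qbin q (2 * n) (n - j) * qpoch q 1 n * q ^ (binom2 (n - j) + n * j))
                * (y ^ n * x ^ j)); [rewrite pow_add, !RtoC_mult; ring|].
  rewrite Hcoef, Hexp, pow_add, !RtoC_mult; ring.
Qed.

Lemma qbinomial_high_half :
  RtoC (qpoch q 1 n)
  * csum (fun i => RtoC (qbin q (2 * n) (S n + i) * q ^ binom2 (S n + i))
                   * y ^ (2 * n - (S n + i))) n
  = RtoC (q ^ binom2 n) * y ^ n * tp_neg q x n.
Proof.
  unfold tp_neg.
  rewrite !(big_morph Cplus 0 Cplus 0 (Cmult _)) by (intros; ring).
  apply big_ext; intros j Hj.
  destruct (tp_coef_qbin q n (S j) ltac:(lra) ltac:(lia)) as [_ Hcoef].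
  replace (S n + j)%nat with (n + S j)%nat by lia.
  replace (2 * n - (n + S j))%nat with (n - S j)%nat by lia.
  assert (Hy : y ^ n = y ^ (n - S j) * y ^ S j) by (rewrite <- Cpow_add_r; f_equal; lia).
  assert (Hyx : y ^ S j * (/ x) ^ S j = RtoC ((q ^ n) ^ S j)).
  { rewrite <- Cpow_mult_l, RtoC_pow; f_equal; unfold y; field; exact Hx. }
  rewrite binom2_add, !pow_add, Hy.
  transitivity (RtoC (qbin q (2 * n) (n + S j) * qpoch q 1 n * q ^ binom2 n
                      * q ^ binom2 (S j) * (q ^ n) ^ S j) * y ^ (n - S j));
    [rewrite pow_mult, !RtoC_mult; ring|].
  rewrite Hcoef, !RtoC_mult, <- Hyx; ring.
Qed.

Theorem finite_triple_product : tp_prod q x n = tp_pos q x n + tp_neg q x n.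
Proof.
  assert (Hscale : RtoC (q ^ binom2 n) * y ^ n <> 0).
  { assert (Hpow : forall k, RtoC (q ^ k) <> 0).
    { intros k E; injection E; pose proof (pow_lt q k ltac:(lra)); lra. }
    apply Cmult_neq_0; [apply Hpow|apply Cpow_nz, Cmult_neq_0; [exact Hx|apply Hpow]]. }
  set (s := RtoC (q ^ binom2 n) * y ^ n) in *.
  transitivity (/ s * (s * tp_prod q x n)); [field; exact Hscale|].
  transitivity (/ s * (s * (tp_pos q x n + tp_neg q x n))); [f_equal|field; exact Hscale].
  unfold s; rewrite Cmult_plus_distr_l, <- qbinomial_low_half, <- qbinomial_high_half.
  rewrite <- Cmult_plus_distr_l, <- (big_split Cplus_comm_monoid).
  replace (S n + n)%nat with (S (2 * n)) by lia.
  rewrite <- q_binomial, shifted_prod_factor; unfold tp_prod; ring.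
Qed.

End FiniteTripleProduct.

(** * Passage to the limit *)

Lemma theta_term_eq q x j : theta_term q x j = Cmult (RtoC (q ^ binom2 (S j))) (Cpow x j).
Proof. unfold theta_term; rewrite binom2_S_div; reflexivity. Qed.

Lemma ex_series_theta_majorant q r : 0 < q < 1 -> 0 < r -> ex_series (fun j => q ^ binom2 j * r ^ j).
Proof.
  intros Hq Hr.
  assert (Hpos : forall j, 0 < q ^ binom2 j * r ^ j)
    by (intros; apply Rmult_lt_0_compat; apply pow_lt; lra).
  apply (ex_series_ext (fun j => Rabs (q ^ binom2 j * r ^ j)));
    [intros j; apply Rabs_pos_eq, Rlt_le, Hpos|].
  apply (ex_series_DAlembert _ 0); [lra | intros j; apply Rgt_not_eq, Hpos|].
  apply (is_lim_seq_ext (fun j => q ^ j * r)).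
  - intros j; simpl binom2; rewrite pow_add; change (r ^ S j) with (r * r ^ j).
    assert (q ^ binom2 j <> 0) by (apply Rgt_not_eq, pow_lt; lra).
    assert (r ^ j <> 0) by (apply Rgt_not_eq, pow_lt; lra).
    replace (q ^ binom2 j * q ^ j * (r * r ^ j) / (q ^ binom2 j * r ^ j)) with (q ^ j * r)
      by (field; auto).
    symmetry; apply Rabs_pos_eq, Rmult_le_pos; [apply pow_le|]; lra.
  - replace (Finite 0) with (Rbar_mult 0 r) by (simpl; f_equal; ring).
    apply is_lim_seq_scal_r, is_lim_seq_geom; rewrite Rabs_pos_eq; lra.
Qed.

Lemma theta_majorant_bounded q r :
  0 < q < 1 -> 0 < r -> exists B, forall N, rsum (fun j => q ^ binom2 j * r ^ j) N <= B.
Proof.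
  intros Hq Hr; set (a := fun j => q ^ binom2 j * r ^ j).
  assert (Ha : forall j, 0 <= a j) by (intros; apply Rmult_le_pos; apply pow_le; lra).
  exists (Series a); intros N.
  apply Rle_trans with (rsum a (S N)); [simpl; specialize (Ha N); lra|].
  rewrite rsum_sum_n.
  apply is_lim_seq_incr_compare; [apply (Series_correct _ (ex_series_theta_majorant q r Hq Hr))|].
  intros n; rewrite sum_Sn; specialize (Ha (S n)); unfold plus; simpl; lra.
Qed.

Lemma Cmod_le_Re_Im (z : C) : Cmod z <= Rabs (Re z) + Rabs (Im z).
Proof.
  pose proof (Cmod2_alt z); pose proof (Cmod_ge_0 z).
  pose proof (Rabs_pos (Re z)); pose proof (Rabs_pos (Im z)).
  rewrite <- (pow2_abs (Re z)), <- (pow2_abs (Im z)) in H.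
  nra.
Qed.

Lemma Cmod_theta_term_le q x j :
  0 < q <= 1 -> Cmod (theta_term q x j) <= q ^ binom2 j * Cmod x ^ j.
Proof.
  intros Hq; rewrite theta_term_eq, Cmod_mult, Cmod_R, Cmod_pow, Rabs_pos_eq by (apply pow_le; lra).
  apply Rmult_le_compat_r; [apply pow_le, Cmod_ge_0|].
  apply pow_antimono; [lra | simpl; lia].
Qed.

Lemma theta_partial_sums_cvg q x : 0 < q < 1 -> x <> RtoC 0 ->
  forall eps, 0 < eps -> exists N, forall n, (N <= n)%nat ->
  Cmod (csum (theta_term q x) (S n) - theta q x)%C < eps.
Proof.
  intros Hq Hx eps Heps.
  assert (Hr : 0 < Cmod x) by (apply Cmod_gt_0; exact Hx).
  assert (Hcomp : forall p : C -> R, (forall z, Rabs (p z) <= Cmod z) ->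
            exists N, forall n, (N <= n)%nat ->
            Rabs (rsum (fun j => p (theta_term q x j)) (S n)
                  - Series (fun j => p (theta_term q x j))) < eps / 2).
  { intros p Hp.
    assert (Hex : ex_series (fun j => p (theta_term q x j))).
    { apply (@ex_series_le R_AbsRing R_CompleteNormedModule _ (fun j => q ^ binom2 j * Cmod x ^ j));
        [|exact (ex_series_theta_majorant q (Cmod x) Hq Hr)].
      intros j; eapply Rle_trans; [apply Hp | apply Cmod_theta_term_le; lra]. }
    assert (Hcvg : is_lim_seq (sum_n (fun j => p (theta_term q x j)))
                              (Series (fun j => p (theta_term q x j))))
      by exact (Series_correct _ Hex).
    apply is_lim_seq_spec in Hcvg; destruct (Hcvg (mkposreal (eps / 2) ltac:(lra))) as [N HN].
    exists N; intros n Hn; rewrite rsum_sum_n; exact (HN n Hn). }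
  destruct (Hcomp Re) as [N1 H1]; [intros z; eapply Rle_trans; [apply Rmax_l | apply Rmax_Cmod]|].
  destruct (Hcomp Im) as [N2 H2]; [intros z; eapply Rle_trans; [apply Rmax_r | apply Rmax_Cmod]|].
  exists (N1 + N2)%nat; intros n Hn.
  specialize (H1 n ltac:(lia)); specialize (H2 n ltac:(lia)).
  eapply Rle_lt_trans; [apply Cmod_le_Re_Im|].
  change (Re (?a - ?b)%C) with (Re a - Re b); change (Im (?a - ?b)%C) with (Im a - Im b).
  rewrite Re_csum, Im_csum; unfold theta, Re, Im in *; cbn [fst snd].
  lra.
Qed.

Lemma pow_eventually_small (q C eps : R) :
  0 <= q < 1 -> 0 < eps -> exists N, forall n, (N <= n)%nat -> C * q ^ n < eps.
Proof.
  intros Hq Heps.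
  destruct (pow_lt_1_zero q ltac:(rewrite Rabs_pos_eq; lra) (eps / (Rabs C + 1)))
    as [N HN]; [apply Rdiv_lt_0_compat; pose proof (Rabs_pos C); lra|].
  exists N; intros n Hn; specialize (HN n Hn).
  pose proof (Rabs_pos C); pose proof (Rle_abs C).
  assert (0 <= q ^ n) by (apply pow_le; lra).
  rewrite Rabs_pos_eq in HN by lra.
  apply (Rmult_lt_compat_l (Rabs C + 1)) in HN; [|lra].
  replace ((Rabs C + 1) * (eps / (Rabs C + 1))) with eps in HN by (field; lra).
  nra.
Qed.

Section TripleProductLimit.

Variables (q : R) (x : C).
Hypothesis Hq : 0 < q < 1.
Hypothesis Hx : x <> 0.

(* [1 - tp_coef q n j <= K q^(n-j)] and [q^(n-j) q^(j(j+1)/2) = q^n q^(j(j-1)/2)], so the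
   error is [q^n] times a partial sum of the convergent series [sum q^(j(j-1)/2) |x|^j]. *)
Lemma tp_pos_error : exists K, forall n,
  Cmod (tp_pos q x n - csum (theta_term q x) (S n))%C <= K * q ^ n.
Proof.
  destruct (theta_majorant_bounded q (Cmod x) Hq (proj1 (Cmod_gt_0 x) Hx)) as [B HB].
  exists (2 / (1 - q) * B); intros n; unfold tp_pos.
  rewrite (big_ext (fun j => RtoC (tp_coef q n j * q ^ binom2 (S j)) * x ^ j)%C
                   (fun j => RtoC (tp_coef q n j) * theta_term q x j)%C)
    by (intros; rewrite theta_term_eq, RtoC_mult; simpl; ring).
  eapply Rle_trans; [apply weighted_csum_error; intros; apply tp_coef_bounds; lra || lia|].
  apply Rle_trans with (rsum (fun j => 2 / (1 - q) * q ^ n * (q ^ binom2 j * Cmod x ^ j)) (S n)).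
  - apply rsum_le; intros j Hj.
    destruct (tp_coef_bounds q n j ltac:(lra) ltac:(lia)) as [_ Hcoef].
    rewrite theta_term_eq, Cmod_mult, Cmod_R, Cmod_pow, Rabs_pos_eq by (apply pow_le; lra).
    replace (2 / (1 - q) * q ^ n * (q ^ binom2 j * Cmod x ^ j))
      with (2 / (1 - q) * q ^ (n - j) * (q ^ binom2 (S j) * Cmod x ^ j)).
    + apply Rmult_le_compat_r; [|exact Hcoef].
      apply Rmult_le_pos; apply pow_le; [lra | apply Cmod_ge_0].
    + simpl binom2; rewrite !pow_add.
      replace (q ^ n) with (q ^ (n - j) * q ^ j) by (rewrite <- pow_add; f_equal; lia).
      ring.
  - rewrite <- (big_morph Rplus 0 Rplus 0 (Rmult (2 / (1 - q) * q ^ n))) by (intros; ring).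
    specialize (HB (S n)).
    assert (0 <= 2 / (1 - q) * q ^ n)
      by (apply Rmult_le_pos; [apply Rlt_le, Rdiv_lt_0_compat | apply pow_le]; lra).
    nra.
Qed.

Lemma tp_neg_error : exists K, forall n,
  Cmod (tp_neg q x n - tp_tail q x n)%C <= K * q ^ n.
Proof.
  set (rho := Cmod (/ x)%C).
  assert (Hrho : 0 < rho)
    by (unfold rho; rewrite Cmod_inv by exact Hx; apply Rinv_0_lt_compat, Cmod_gt_0, Hx).
  destruct (theta_majorant_bounded q rho Hq Hrho) as [B HB].
  set (K := 2 / (1 - q) / q * rho).
  assert (HK : 0 <= K) by (apply Rmult_le_pos; [apply Rlt_le, Rdiv_lt_0_compat;
                             [apply Rdiv_lt_0_compat|]|]; lra).
  exists (K * B); intros n; unfold tp_neg, tp_tail.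
  rewrite (big_ext (fun j => RtoC (tp_coef q n (S j) * q ^ binom2 (S j)) * (/ x) ^ S j)%C
                   (fun j => RtoC (tp_coef q n (S j)) * (RtoC (q ^ binom2 (S j)) * (/ x) ^ S j))%C)
    by (intros; rewrite RtoC_mult; ring).
  eapply Rle_trans; [apply weighted_csum_error; intros; apply tp_coef_bounds; lra || lia|].
  apply Rle_trans with (rsum (fun j => K * q ^ n * (q ^ binom2 j * rho ^ j)) n).
  - apply rsum_le; intros j Hj.
    destruct (tp_coef_bounds q n (S j) ltac:(lra) ltac:(lia)) as [_ Hcoef].
    rewrite Cmod_mult, Cmod_R, Cmod_pow, Rabs_pos_eq by (apply pow_le; lra); fold rho.
    replace (K * q ^ n * (q ^ binom2 j * rho ^ j))
      with (2 / (1 - q) * q ^ (n - S j) * (q ^ binom2 (S j) * rho ^ S j)).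
    + apply Rmult_le_compat_r; [|exact Hcoef].
      apply Rmult_le_pos; apply pow_le; lra.
    + assert (Hn : q ^ n = q ^ (n - S j) * q ^ j * q).
      { replace n with (n - S j + j + 1)%nat at 1 by lia; rewrite !pow_add; simpl; ring. }
      unfold K; rewrite Hn; simpl binom2; simpl pow; rewrite pow_add.
      field; lra.
  - rewrite <- (big_morph Rplus 0 Rplus 0 (Rmult (K * q ^ n))) by (intros; ring).
    specialize (HB n).
    assert (0 <= K * q ^ n) by (apply Rmult_le_pos; [|apply pow_le]; lra).
    nra.
Qed.

Theorem triple_product_limit eps : 0 < eps -> exists N, forall n, (N <= n)%nat ->
  Cmod (tp_prod q x n - tp_tail q x n - theta q x)%C < eps.
Proof.
  intros Heps.
  destruct tp_pos_error as [K1 Hpos]; destruct tp_neg_error as [K2 Hneg].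
  destruct (pow_eventually_small q K1 (eps / 3)) as [N1 H1]; [lra | lra |].
  destruct (pow_eventually_small q K2 (eps / 3)) as [N2 H2]; [lra | lra |].
  destruct (theta_partial_sums_cvg q x Hq Hx (eps / 3)) as [N3 H3]; [lra |].
  exists (N1 + N2 + N3)%nat; intros n Hn.
  specialize (Hpos n); specialize (Hneg n).
  specialize (H1 n ltac:(lia)); specialize (H2 n ltac:(lia)); specialize (H3 n ltac:(lia)).
  rewrite finite_triple_product by assumption.
  replace (tp_pos q x n + tp_neg q x n - tp_tail q x n - theta q x)%C
    with ((tp_pos q x n - csum (theta_term q x) (S n)) + (tp_neg q x n - tp_tail q x n)
          + (csum (theta_term q x) (S n) - theta q x))%C by ring.
  eapply Rle_lt_trans; [apply Cmod_triangle|].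
  pose proof (Cmod_triangle (tp_pos q x n - csum (theta_term q x) (S n))
                            (tp_neg q x n - tp_tail q x n)).
  lra.
Qed.

End TripleProductLimit.

(** * Estimates on the line Im x = w *)

Lemma w_sq : w ^ 2 = 9 / 2.
Proof.
  unfold w; assert (0 < sqrt 2) by (apply sqrt_lt_R0; lra).
  replace ((3 / sqrt 2) ^ 2) with (9 / (sqrt 2 * sqrt 2)) by (field; lra).
  rewrite sqrt_sqrt by lra; field.
Qed.

Lemma w_bounds : 212 / 100 <= w <= 213 / 100.
Proof.
  assert (0 < w) by (unfold w; apply Rdiv_lt_0_compat; [lra | apply sqrt_lt_R0; lra]).
  pose proof w_sq; split; nra.
Qed.

Lemma pair_poly_le s t : 0 <= s <= 1 -> 0 <= t -> t ^ 2 <= 9 / 2 ->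
  ((1 - s * t) ^ 2 + s ^ 2 * (9 / 2)) * ((s - t) ^ 2 + 9 / 2)
  <= ((1 + s ^ 2) ^ 2 + 32 / 9 * s ^ 2) * (t ^ 2 + 9 / 2).
Proof.
  intros Hs Ht Ht2; set (r2 := t ^ 2 + 9 / 2).
  (* With [r2 = |x|^2], [Id] writes [|1 + s x|^2 |x + s|^2 |x|^2] as a sum of two squares;
     the constant [32/9] is [w^2 * 64/81], from [(r2 - 1)^2 <= 64/81 r2^2] for [r2 <= 9]. *)
  assert (Hr2 : 9 / 2 <= r2 <= 9) by (unfold r2; nra).
  assert (Id : ((1 - s * t) ^ 2 + s ^ 2 * (9 / 2)) * ((s - t) ^ 2 + 9 / 2) * r2
               = (r2 * (1 + s ^ 2) - s * t * (r2 + 1)) ^ 2 + s ^ 2 * (9 / 2) * (r2 - 1) ^ 2)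
    by (unfold r2; ring).
  assert (Hst : 0 <= s * t * (r2 + 1) <= 2 * r2 * (1 + s ^ 2)).
  { assert (t <= 213 / 100) by nra.
    split; [apply Rmult_le_pos; [apply Rmult_le_pos|]; lra|].
    assert (s * t <= s * (213 / 100)) by (apply Rmult_le_compat_l; lra).
    assert (s * t * (r2 + 1) <= s * (213 / 100) * (11 / 9 * r2))
      by (apply Rmult_le_compat; nra).
    nra. }
  assert ((r2 * (1 + s ^ 2) - s * t * (r2 + 1)) ^ 2 <= (r2 * (1 + s ^ 2)) ^ 2) by nra.
  assert (s ^ 2 * (9 / 2) * (r2 - 1) ^ 2 <= 32 / 9 * s ^ 2 * r2 ^ 2)
    by (assert ((r2 - 1) ^ 2 <= 64 / 81 * r2 ^ 2) by nra; nra).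
  apply (Rmult_le_reg_r r2); [lra|]; rewrite Id; nra.
Qed.

Definition xw (t : R) : C := (- t, w).

Lemma xw_neq_0 t : xw t <> RtoC 0.
Proof. intros E; injection E; pose proof w_bounds; lra. Qed.

Lemma Cmod_xw_sq t : Cmod (xw t) ^ 2 = t ^ 2 + w ^ 2.
Proof. rewrite Cmod2_alt; unfold xw, Re, Im; simpl; ring. Qed.

Lemma Cmod_1_plus_xw_sq t s : Cmod (1 + xw t * RtoC s)%C ^ 2 = (1 - s * t) ^ 2 + (s * w) ^ 2.
Proof. rewrite Cmod2_alt; unfold xw, Re, Im; simpl; ring. Qed.

Lemma Cmod_xw_plus_sq t s : Cmod (xw t + RtoC s)%C ^ 2 = (s - t) ^ 2 + w ^ 2.
Proof. rewrite Cmod2_alt; unfold xw, Re, Im; simpl; ring. Qed.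

Lemma Cmod_1_plus_inv_xw t s :
  Cmod (1 + / xw t * RtoC s)%C = Cmod (xw t + RtoC s)%C / Cmod (xw t).
Proof.
  pose proof (xw_neq_0 t); rewrite <- Cmod_div by assumption.
  f_equal; field; assumption.
Qed.

Definition pair_bound (s : R) : R := (1 - s) ^ 2 * ((1 + s ^ 2) ^ 2 + 32 / 9 * s ^ 2).

Lemma pair_factor_sq_le t s : 0 <= s <= 1 -> 0 <= t <= w ->
  ((1 - s) * Cmod (1 + xw t * RtoC s)%C * Cmod (1 + / xw t * RtoC s)%C) ^ 2 <= pair_bound s.
Proof.
  intros Hs Ht; rewrite Cmod_1_plus_inv_xw.
  assert (Hr : 0 < Cmod (xw t)) by (apply Cmod_gt_0, xw_neq_0).
  replace (((1 - s) * Cmod (1 + xw t * RtoC s)%C * (Cmod (xw t + RtoC s)%C / Cmod (xw t))) ^ 2)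
    with ((1 - s) ^ 2 * (Cmod (1 + xw t * RtoC s)%C ^ 2 * Cmod (xw t + RtoC s)%C ^ 2)
          / Cmod (xw t) ^ 2) by (field; lra).
  rewrite Cmod_1_plus_xw_sq, Cmod_xw_plus_sq, Cmod_xw_sq, w_sq.
  assert (0 < t ^ 2 + 9 / 2) by nra.
  apply Rle_div_l; [lra|]; unfold pair_bound; rewrite Rmult_assoc.
  apply Rmult_le_compat_l; [apply pow2_ge_0|].
  pose proof w_bounds; pose proof w_sq.
  replace ((s * w) ^ 2) with (s ^ 2 * (9 / 2)) by (rewrite <- w_sq; ring).
  apply pair_poly_le; nra.
Qed.

Lemma last_factor_le t s : 0 <= s <= 1 -> 0 <= t <= w ->
  (1 - s) * Cmod (1 + xw t * RtoC s)%C <= 1.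
Proof.
  intros Hs Ht.
  assert (HA : Cmod (1 + xw t * RtoC s)%C ^ 2 <= 1 + 9 * s ^ 2).
  { rewrite Cmod_1_plus_xw_sq; pose proof w_sq; pose proof w_bounds.
    assert (0 <= s * t) by nra.
    assert (s ^ 2 * (t ^ 2 + w ^ 2) <= s ^ 2 * 9) by (apply Rmult_le_compat_l; nra).
    nra. }
  (* [1 - (1 - s)^2 (1 + 9 s^2) = s (2 - 10 s + 18 s^2 - 9 s^3)], a cubic positive on [0, 1]. *)
  assert (Hpoly : (1 - s) ^ 2 * (1 + 9 * s ^ 2) <= 1).
  { assert (0 <= (1 - s) * (s - 2 / 5) ^ 2) by (apply Rmult_le_pos; [lra | apply pow2_ge_0]).
    assert (0 <= (s - 17 / 45) ^ 2) by apply pow2_ge_0.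
    assert (0 <= s * (2 - 10 * s + 18 * s ^ 2 - 9 * s ^ 3)) by (apply Rmult_le_pos; nra).
    nra. }
  pose proof (Cmod_ge_0 (1 + xw t * RtoC s)%C).
  assert (((1 - s) * Cmod (1 + xw t * RtoC s)%C) ^ 2 <= 1).
  { rewrite Rpow_mult_distr.
    apply Rle_trans with ((1 - s) ^ 2 * (1 + 9 * s ^ 2)); [|exact Hpoly].
    apply Rmult_le_compat_l; [apply pow2_ge_0 | exact HA]. }
  nra.
Qed.

(* [pow34_lb k] is a decimal lower bound for [(3/4)^(k+1)], and [pair_ub k] an upper
   bound for [pair_bound] above it; from [k = 12] on the trivial bounds [0] and [1]. *)
Definition pow34_lb (k : nat) : R :=
  match k with
  | 0 => 3/4 | 1 => 281/500 | 2 => 421/1000 | 3 => 79/250 | 4 => 237/1000 | 5 => 177/1000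
  | 6 => 133/1000 | 7 => 1/10 | 8 => 3/40 | 9 => 563/10000 | 10 => 211/5000 | 11 => 79/2500
  | _ => 0
  end.

Definition pair_ub (k : nat) : R :=
  match k with
  | 0 => 279/1000 | 1 => 549/1000 | 2 => 677/1000 | 3 => 367/500 | 4 => 767/1000
  | 5 => 797/1000 | 6 => 827/1000 | 7 => 857/1000 | 8 => 221/250 | 9 => 227/250
  | 10 => 116/125 | 11 => 189/200
  | _ => 1
  end.

Lemma pow34_lb_le k : pow34_lb k <= (3 / 4) ^ S k.
Proof. do 12 (destruct k as [|k]; [simpl; lra|]); apply pow_le; lra. Qed.

Lemma pow34_lb_nonneg k : 0 <= pow34_lb k.
Proof. do 12 (destruct k as [|k]; [simpl; lra|]); simpl; lra. Qed.

Lemma pair_bound_le_ub k s : pow34_lb k <= s <= 1 -> pair_bound s <= pair_ub k.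
Proof.
  intros Hs; assert (Hgap : 0 <= (s - pow34_lb k) * (1 - s)) by (apply Rmult_le_pos; lra).
  assert (Hs0 : 0 <= s) by (pose proof (pow34_lb_nonneg k); lra).
  unfold pair_bound; do 12 (destruct k as [|k]; [simpl in *; nra|]); simpl in *; nra.
Qed.

Lemma pair_ub_prod m : (12 <= m)%nat -> rprod pair_ub m <= 16 / 625.
Proof.
  intros Hm; replace m with (12 + (m - 12))%nat by lia.
  rewrite (big_split Rmult_comm_monoid).
  assert (Htail : forall p, rprod (fun i => pair_ub (12 + i)%nat) p = 1)
    by (induction p as [|p IH]; [reflexivity|]; cbn [big]; rewrite IH; simpl; ring).
  rewrite Htail; simpl; lra.
Qed.

Lemma paired_prod_le q t m : 3 / 4 <= q < 1 -> 0 <= t <= w -> (12 <= m)%nat ->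
  0 <= rprod (fun k => (1 - q ^ S k) * Cmod (1 + xw t * RtoC (q ^ S k))%C
                      * Cmod (1 + / xw t * RtoC (q ^ S k))%C) m <= 4 / 25.
Proof.
  intros Hq Ht Hm.
  set (g := fun k => (1 - q ^ S k) * Cmod (1 + xw t * RtoC (q ^ S k))%C
                     * Cmod (1 + / xw t * RtoC (q ^ S k))%C).
  assert (Hg : forall k, 0 <= g k /\ g k ^ 2 <= pair_ub k).
  { intros k.
    assert (Hs : 0 <= q ^ S k <= 1)
      by (split; [apply pow_le; lra | rewrite <- (pow1 (S k)); apply pow_incr; lra]).
    assert (Hlb : pow34_lb k <= q ^ S k)
      by (eapply Rle_trans; [apply pow34_lb_le | apply pow_incr; lra]).
    split.
    - apply Rmult_le_pos; [apply Rmult_le_pos; [lra|]|]; apply Cmod_ge_0.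
    - eapply Rle_trans; [apply pair_factor_sq_le; [exact Hs | exact Ht]|].
      apply pair_bound_le_ub; lra. }
  assert (H0 : 0 <= rprod g m) by (apply (rprod_le g g); intros; split; [apply Hg | lra]).
  assert (rprod g m ^ 2 <= 16 / 625); [|nra].
  rewrite (big_morph Rmult 1 Rmult 1 (fun z => z ^ 2)) by (intros; ring).
  eapply Rle_trans; [apply (rprod_le _ pair_ub); intros; split; [apply pow2_ge_0 | apply Hg]|].
  apply pair_ub_prod, Hm.
Qed.

Lemma tp_prod_le q t n : 3 / 4 <= q < 1 -> 0 <= t <= w -> (13 <= n)%nat ->
  Cmod (tp_prod q (xw t) n) <= Cmod (1 + / xw t)%C * (4 / 25).
Proof.
  intros Hq Ht Hn.
  set (x := xw t).
  set (a := fun k => (1 - q ^ S k) * Cmod (1 + x * RtoC (q ^ S k))%C).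
  set (b := fun k => Cmod (1 + / x * RtoC (q ^ k))%C).
  assert (Hab : Cmod (tp_prod q x n) = rprod a n * rprod b n).
  { unfold tp_prod; rewrite !Cmod_mult, Cmod_R, Rabs_pos_eq by (apply qpoch_bounds; lra).
    rewrite !(big_morph Cmult 1 Rmult 1 Cmod) by (apply Cmod_1 || apply Cmod_mult).
    unfold qpoch; rewrite <- (big_op Rmult_comm_monoid); reflexivity. }
  destruct n as [|m]; [lia|].
  rewrite Hab, (big_interleave Rmult_comm_monoid).
  replace (b O) with (Cmod (1 + / x)%C) by (unfold b; rewrite pow_O, Cmult_1_r; reflexivity).
  pose proof (paired_prod_le q t m Hq Ht ltac:(lia)) as Hpairs.
  assert (Hlast : 0 <= a m <= 1).
  { assert (Hs : 0 <= q ^ S m <= 1)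
      by (split; [apply pow_le; lra | rewrite <- (pow1 (S m)); apply pow_incr; lra]).
    split; [apply Rmult_le_pos; [lra | apply Cmod_ge_0]|].
    apply last_factor_le; [exact Hs | exact Ht]. }
  pose proof (Cmod_ge_0 (1 + / x)%C).
  unfold a at 1, b at 1; cbv beta; fold x in Hpairs.
  apply Rle_trans with (Cmod (1 + / x)%C * (4 / 25) * 1); [|lra].
  apply Rmult_le_compat; [apply Rmult_le_pos | | apply Rmult_le_compat_l |]; lra.
Qed.

Lemma tp_tail_lower q x n : 0 <= q <= 1 -> x <> RtoC 0 -> Cmod (/ x)%C < 1 -> (2 <= n)%nat ->
  Cmod (/ x)%C ^ 2 * Cmod (x + RtoC q)%C - Cmod (/ x)%C ^ 3 / (1 - Cmod (/ x)%C)
  <= Cmod (tp_tail q x n).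
Proof.
  intros Hq Hx Hrho Hn; set (rho := Cmod (/ x)%C) in *.
  assert (Hrho0 : 0 <= rho) by apply Cmod_ge_0.
  unfold tp_tail; replace n with (2 + (n - 2))%nat by lia.
  rewrite (big_split Cplus_comm_monoid).
  set (rest := csum (fun i => RtoC (q ^ binom2 (S (2 + i))) * (/ x) ^ S (2 + i))%C (n - 2)).
  replace (csum (fun j => RtoC (q ^ binom2 (S j)) * (/ x) ^ S j)%C 2)
    with (/ x * / x * (x + RtoC q))%C by (simpl; rewrite Rmult_1_r; field; exact Hx).
  assert (Hrest : Cmod rest <= rho ^ 3 / (1 - rho)).
  { eapply Rle_trans; [apply Cmod_csum_le|].
    apply Rle_trans with (rsum (fun i => rho ^ 3 * rho ^ i) (n - 2)).
    - apply rsum_le; intros i _.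
      rewrite Cmod_mult, Cmod_R, Cmod_pow, Rabs_pos_eq by (apply pow_le; lra); fold rho.
      replace (S (2 + i)) with (3 + i)%nat by lia; rewrite (pow_add rho).
      assert (q ^ binom2 (3 + i) <= 1) by (rewrite <- (pow1 (binom2 (3 + i))); apply pow_incr; lra).
      assert (0 <= rho ^ 3 * rho ^ i) by (apply Rmult_le_pos; apply pow_le; lra).
      nra.
    - rewrite <- (big_morph Rplus 0 Rplus 0 (Rmult (rho ^ 3))) by (intros; ring).
      apply Rmult_le_compat_l; [apply pow_le; lra | apply geom_partial_le; lra]. }
  pose proof (Cmod_triangle (/ x * / x * (x + RtoC q) + rest)%C (- rest)%C) as Htri.
  replace (/ x * / x * (x + RtoC q) + rest + - rest)%C with (/ x * / x * (x + RtoC q))%C in Htri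
    by ring.
  rewrite Cmod_opp, !Cmod_mult in Htri; fold rho in Htri.
  replace (rho ^ 2) with (rho * rho) by ring; lra.
Qed.

Lemma tail_prod_gap_pos rho : 0 < rho -> 1 / 9 <= rho ^ 2 <= 2 / 9 ->
  0 < rho ^ 2 * w - rho ^ 3 / (1 - rho) - rho * (12 / 5) * (4 / 25).
Proof.
  intros Hrho [Hlo Hhi]; pose proof w_bounds.
  assert (Hr : 1 / 3 <= rho <= 48 / 100) by nra.
  replace (rho ^ 2 * w - rho ^ 3 / (1 - rho) - rho * (12 / 5) * (4 / 25))
    with (rho * ((rho * w * (1 - rho) - rho ^ 2 - 48 / 125 * (1 - rho)) / (1 - rho)))
    by (field; lra).
  apply Rmult_lt_0_compat; [lra|]; apply Rdiv_lt_0_compat; nra.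
Qed.

Lemma tp_tail_dominates_prod q t : 3 / 4 <= q < 1 -> 0 <= t <= w ->
  exists D, 0 < D /\ forall n, (13 <= n)%nat ->
  D <= Cmod (tp_tail q (xw t) n) - Cmod (tp_prod q (xw t) n).
Proof.
  intros Hq Ht; pose proof w_bounds; pose proof w_sq.
  set (rho := Cmod (/ xw t)%C).
  assert (Hr : 0 < Cmod (xw t)) by (apply Cmod_gt_0, xw_neq_0).
  assert (Hrho : rho * Cmod (xw t) = 1)
    by (unfold rho; rewrite Cmod_inv by apply xw_neq_0; field; lra).
  assert (Hrho2 : 1 / 9 <= rho ^ 2 <= 2 / 9).
  { pose proof (Cmod_xw_sq t).
    assert (rho ^ 2 * Cmod (xw t) ^ 2 = 1) by (rewrite <- Rpow_mult_distr, Hrho; ring).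
    split; nra. }
  assert (Hrho0 : 0 < rho) by nra.
  assert (Hxq : w <= Cmod (xw t + RtoC q)%C).
  { pose proof (Cmod_xw_plus_sq t q); pose proof (Cmod_ge_0 (xw t + RtoC q)%C).
    pose proof (pow2_ge_0 (q - t)); nra. }
  assert (Hx1 : Cmod (1 + / xw t)%C <= rho * (12 / 5)).
  { replace (1 + / xw t)%C with (1 + / xw t * RtoC 1)%C by ring.
    rewrite Cmod_1_plus_inv_xw; unfold Rdiv.
    replace (/ Cmod (xw t)) with rho by (field_simplify_eq; lra).
    pose proof (Cmod_xw_plus_sq t 1); pose proof (Cmod_ge_0 (xw t + RtoC 1)%C).
    assert (Cmod (xw t + RtoC 1)%C <= 12 / 5) by nra.
    nra. }
  exists (rho ^ 2 * w - rho ^ 3 / (1 - rho) - rho * (12 / 5) * (4 / 25)).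
  split; [apply tail_prod_gap_pos; assumption|].
  intros n Hn.
  pose proof (tp_tail_lower q (xw t) n ltac:(lra) (xw_neq_0 t) ltac:(fold rho; nra) ltac:(lia))
    as Hlo.
  pose proof (tp_prod_le q t n Hq Ht Hn) as Hhi; fold rho in Hlo.
  assert (rho ^ 2 * w <= rho ^ 2 * Cmod (xw t + RtoC q)%C)
    by (apply Rmult_le_compat_l; [apply pow2_ge_0 | exact Hxq]).
  nra.
Qed.

Theorem lemma8 (q t : R) :
  3 / 4 <= q < 1 -> 0 <= t <= w ->
  theta q ((- t)%R, w) <> RtoC 0.
Proof.
  intros Hq Ht Htheta; change ((- t)%R, w) with (xw t) in Htheta.
  destruct (tp_tail_dominates_prod q t Hq Ht) as [D [HD Hgap]].
  destruct (triple_product_limit q (xw t) ltac:(lra) (xw_neq_0 t) D HD) as [N Hlim].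
  specialize (Hlim (N + 13)%nat ltac:(lia)); specialize (Hgap (N + 13)%nat ltac:(lia)).
  rewrite Htheta in Hlim.
  set (P := tp_prod q (xw t) (N + 13)) in *; set (G := tp_tail q (xw t) (N + 13)) in *.
  pose proof (Cmod_triangle (P - G - 0)%C (- P)%C) as Htri.
  replace (P - G - 0 + - P)%C with (- G)%C in Htri by ring.
  rewrite !Cmod_opp in Htri.
  lra.
Qed.
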